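(* Let $N$ be a positive integer, $R\in\{0,1,\dots,N\}$, $B=N-R$, $n\in\{1,\dots,N\}$, and let $X$ have the hypergeometric distribution $$\Pr\{X=x\}=\frac{\binom Rx\binom B{n-x}}{\binom Nn}\ \text{ for }x\in\{0,\dots,n\}\text{ with }x\le R,\ n-x\le B,\qquad \Pr\{X=x\}=0\text{ for other }x\in\{0,\dots,n\}.$$ Let $\mu=nR/N$. Let $r,b$ be nonnegative integers with $r\le R$, $b\le B$, $r+b=n$. Define $\widehat R=\min\{N,\lfloor(N+1)\frac rn\rfloor\}$ and $\widehat B=N-\widehat R$. Then $$\Pr\{X\le r\}\le\frac{\binom Rr\binom Bb}{\binom{\widehat R}r\binom{\widehat B}b}\ \text{ for }r\le\mu,\qquad \Pr\{X\ge r\}\le\frac{\binom Rr\binom Bb}{\binom{\widehat R}r\binom{\widehat B}b}\ \text{ for }r\ge\mu.$$ *)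

From mathcomp Require Import all_boot all_order all_algebra.
Set Implicit Arguments. Unset Strict Implicit. Unset Printing Implicit Defensive.
Import Order.TTheory GRing.Theory Num.Theory.
Local Open Scope ring_scope.

(* Hypergeometric pmf: Pr{X = x} = C(R,x) C(N-R,n-x) / C(N,n), for x in 0..n.
   Since 'C(m,k) = 0 when k > m, this is 0 when x > R or n - x > N - R. *)
Definition hyp_pmf (N R n x : nat) : rat :=
  ('C(R, x) * 'C(N - R, n - x))%:R / ('C(N, n))%:R.

Definition hyp_cdf_le (N R n r : nat) : rat :=
  \sum_(0 <= x < n.+1 | (x <= r)%N) hyp_pmf N R n x.
Definition hyp_cdf_ge (N R n r : nat) : rat :=
  \sum_(0 <= x < n.+1 | (r <= x)%N) hyp_pmf N R n x.

Definition hyp_mean (N R n : nat) : rat := (n * R)%:R / N%:R.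

Definition Rhat (N n r : nat) : nat := minn N (((N + 1) * r) %/ n).

Definition hyp_bound (N R n r b : nat) : rat :=
  ('C(R, r) * 'C(N - R, b))%:R /
  ('C(Rhat N n r, r) * 'C(N - Rhat N n r, b))%:R.

From mathcomp Require Import all_boot all_order all_algebra.
From mathcomp Require Import zify.
Set Implicit Arguments. Unset Strict Implicit. Unset Printing Implicit Defensive.
Import Order.TTheory GRing.Theory Num.Theory.

(* The hypergeometric weights w_S(x) = C(S,x) C(N-S,n-x) are totally positive
   of order 2 in (S, x): for S <= S' and x <= y,
   w_S'(x) w_S(y) <= w_S'(y) w_S(x).  Comparing the weights of the true
   population R with those of Rhat, which lies on the same side of R as the
   tail, gives w_R(x) / w_R(r) <= w_Rhat(x) / w_Rhat(r) on the tail; summing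
   and using Vandermonde's identity (total Rhat-weight C(N,n)) bounds the tail
   probability by w_R(r) / w_Rhat(r).  The choice of Rhat guarantees that
   w_Rhat(r) > 0 and that Rhat <= R when r <= mu, R <= Rhat when r >= mu. *)

Lemma binomial_TP2 (a a' i j : nat) : (a <= a')%N -> (j <= i)%N ->
  ('C(a, i) * 'C(a', j) <= 'C(a, j) * 'C(a', i))%N.
Proof.
move=> le_aa'; elim: i => [|i IHi]; first by rewrite leqn0 => /eqP ->.
rewrite leq_eqVlt => /orP [/eqP -> //|]; rewrite ltnS => /IHi {}IHi.
rewrite -(leq_pmul2l (ltn0Sn i)) mulnA mul_bin_left mulnCA mul_bin_left -mulnA.
apply: leq_trans (leq_mul (leqnn _) IHi) _.
rewrite [X in (_ <= X)%N]mulnCA.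
by apply: leq_mul; [exact: leq_sub2r | rewrite mulnC].
Qed.

Definition hyp_weight (N n S x : nat) : nat := 'C(S, x) * 'C(N - S, n - x).

Lemma hyp_weight_TP2 (N n S S' x y : nat) : (S <= S')%N -> (x <= y)%N ->
  (hyp_weight N n S' x * hyp_weight N n S y
     <= hyp_weight N n S' y * hyp_weight N n S x)%N.
Proof.
move=> le_SS' le_xy; rewrite /hyp_weight mulnACA [X in (_ <= X)%N]mulnACA.
apply: leq_mul.
  by rewrite mulnC [X in (_ <= X)%N]mulnC; apply: binomial_TP2.
by apply: binomial_TP2; apply: leq_sub2l.
Qed.

Lemma sum_hyp_weight (N n S : nat) : (S <= N)%N ->
  (\sum_(0 <= x < n.+1) hyp_weight N n S x)%N = 'C(N, n).
Proof. by move=> le_SN; rewrite big_mkord binomial.Vandermonde subnKC. Qed.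

Section Rhat.

Variables N n r : nat.
Hypotheses (n_gt0 : (0 < n)%N) (le_nN : (n <= N)%N) (le_rn : (r <= n)%N).

Lemma Rhat_leq : (Rhat N n r <= N)%N.
Proof. exact: geq_minl. Qed.

Lemma hyp_weight_Rhat_gt0 : (0 < hyp_weight N n (Rhat N n r) r)%N.
Proof.
rewrite /hyp_weight /Rhat muln_gt0 !bin_gt0 leq_min leq_divRL //.
rewrite -andbA; apply/and3P; split; [lia | nia |].
have [->|ne_rn] := eqVneq r n; first by rewrite subnn.
suff : ((N + 1) * r %/ n <= N - n + r)%N by lia.
by rewrite -ltnS ltn_divLR //; nia.
Qed.

Lemma Rhat_leq_of_below_mean (R : nat) : (R <= N)%N ->
  (r * N <= n * R)%N -> (Rhat N n r <= R)%N.
Proof.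
move=> le_RN le_r_mean; rewrite /Rhat.
have [eq_rn|ne_rn] := eqVneq r n.
  by move: le_r_mean; rewrite eq_rn leq_pmul2l //; lia.
suff : ((N + 1) * r %/ n <= R)%N by lia.
by rewrite -ltnS ltn_divLR //; nia.
Qed.

Lemma leq_Rhat_of_above_mean (R : nat) : (R <= N)%N ->
  (n * R <= r * N)%N -> (R <= Rhat N n r)%N.
Proof. by move=> le_RN le_mean_r; rewrite leq_min le_RN leq_divRL //; nia. Qed.

End Rhat.

Local Open Scope ring_scope.

Lemma ler_nat_ratio (a b c d : nat) : (0 < c)%N -> (0 < d)%N ->
  (a * d <= b * c)%N -> a%:R / c%:R <= b%:R / d%:R :> rat.
Proof.
move=> c_gt0 d_gt0 le_cross.
by rewrite ler_pdivrMr ?ltr0n // mulrAC ler_pdivlMr ?ltr0n // -!natrM ler_nat.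
Qed.

Lemma hyp_tail_bound (N R n r T : nat) (P : pred nat) :
  (n <= N)%N -> (T <= N)%N -> (0 < hyp_weight N n T r)%N ->
  (forall x, P x ->
     hyp_weight N n R x * hyp_weight N n T r
       <= hyp_weight N n R r * hyp_weight N n T x)%N ->
  \sum_(0 <= x < n.+1 | P x) hyp_pmf N R n x
    <= (hyp_weight N n R r)%:R / (hyp_weight N n T r)%:R.
Proof.
move=> le_nN le_TN wTr_gt0 cross.
rewrite /hyp_pmf -mulr_suml -natr_sum.
apply: ler_nat_ratio wTr_gt0 _; first by rewrite bin_gt0.
rewrite big_distrl /=.
apply: (@leq_trans (\sum_(0 <= x < n.+1 | P x)
                      hyp_weight N n R r * hyp_weight N n T x)%N).
  exact: leq_sum.
rewrite -big_distrr /= leq_mul2l -(sum_hyp_weight n le_TN) big_mkcond /=.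
by apply/orP; right; apply: leq_sum => x _; case: ifP.
Qed.

Lemma ler_hyp_mean (N R n r : nat) : (0 < N)%N ->
  (r%:R <= hyp_mean N R n) = (r * N <= n * R)%N.
Proof. by move=> N_gt0; rewrite ler_pdivlMr ?ltr0n // -natrM ler_nat. Qed.

Lemma hyp_mean_ler (N R n r : nat) : (0 < N)%N ->
  (hyp_mean N R n <= r%:R) = (n * R <= r * N)%N.
Proof. by move=> N_gt0; rewrite ler_pdivrMr ?ltr0n // -natrM ler_nat. Qed.

Theorem theorem7 (N R n r b : nat) :
  (0 < N)%N -> (R <= N)%N -> (1 <= n)%N -> (n <= N)%N ->
  (r <= R)%N -> (b <= N - R)%N -> (r + b)%N = n ->
  (r%:R <= hyp_mean N R n -> hyp_cdf_le N R n r <= hyp_bound N R n r b) /\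
  (hyp_mean N R n <= r%:R -> hyp_cdf_ge N R n r <= hyp_bound N R n r b).
Proof.
move=> N_gt0 le_RN n_gt0 le_nN _ _ def_n.
have -> : b = (n - r)%N by lia.
have le_rn : (r <= n)%N by lia.
have wRhat_gt0 := hyp_weight_Rhat_gt0 n_gt0 le_nN le_rn.
have tail := hyp_tail_bound le_nN (Rhat_leq N n r) wRhat_gt0.
rewrite ler_hyp_mean // hyp_mean_ler //; split=> [le_r_mean | le_mean_r].
- have le_Rhat_R : (Rhat N n r <= R)%N by exact: Rhat_leq_of_below_mean.
  by apply: tail => x le_xr; exact: hyp_weight_TP2.
- have le_R_Rhat : (R <= Rhat N n r)%N by exact: leq_Rhat_of_above_mean.
  apply: tail => x le_rx.
  by rewrite mulnC [X in (_ <= X)%N]mulnC; exact: hyp_weight_TP2.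
Qed.
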